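(* Consider the second order operator $\mathcal{L}$ on functions of $(x,y)\in\mathbb{R}^2$, with $Z=x+iy$, whose carré du champ $\Gamma$ and action on coordinates are given (using complex notation, with $\Gamma$ complex bilinear and $\mathcal{L}$ complex linear) by $$\Gamma(Z,Z)=\bar Z-Z^2,\quad \Gamma(\bar Z,\bar Z)=Z-\bar Z^2,\quad \Gamma(Z,\bar Z)=\tfrac12(1-Z\bar Z),\quad \mathcal{L}(Z)=-Z,\quad \mathcal{L}(\bar Z)=-\bar Z.$$ Let $D(Z,\bar Z)=\Gamma(Z,\bar Z)^2-\Gamma(Z,Z)\Gamma(\bar Z,\bar Z)=\tfrac14(1-Z\bar Z)^2-(\bar Z-Z^2)(Z-\bar Z^2)$. Let $\Omega_D$ be the deltoid domain (the bounded open region of $\mathbb{C}$ enclosed by the deltoid curve). Then: (1) $D(Z,\bar Z)>0$ on $\Omega_D$; (2) $\{D(Z,\bar Z)=0\}$ is the deltoid curve, i.e. the boundary of $\Omega_D$; (3) the reversible measure of $\mathcal{L}$ on $\Omega_D$ has density (up to a multiplicative constant) $D(Z,\bar Z)^{-1/2}$ with respect to Lebesgue measure $dx\,dy$, i.e. with $\rho=D^{-1/2}$ one has $\mathcal{L}f=\rho^{-1}\sum_{i,j}\partial_i(\rho\, g^{ij}\partial_j f)$ on $\Omega_D$, where $(g^{ij})$ is the matrix $\Gamma(x_i,x_j)$ in the real coordinates $(x_1,x_2)=(x,y)$; (4) if $z\in\mathbb{R}^2$, $z_k=e^{i\,u_k\cdot z}$ ($k=1,2,3$) with $u_1=(1,0)$,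 $u_2=(-\tfrac12,\tfrac{\sqrt3}2)$, $u_3=(-\tfrac12,-\tfrac{\sqrt3}2)$, and $Z=\frac13(z_1+z_2+z_3)$, then $$D(Z,\bar Z)=-\frac{(z_1-z_2)^2(z_2-z_3)^2(z_3-z_1)^2}{2^2\,3^3}.$$
   Context: The deltoid (Steiner hypocycloid) curve relevant here is the hypocycloid with cusps at the three cube roots of unity $1,j,\bar j$, parametrized by $t\mapsto \frac13(2e^{it}+e^{-2it})$, $t\in[0,2\pi]$; $\Omega_D$ is the bounded open region it encloses, which is the interior of the image of $\mathbb{R}^2$ under the map $z\mapsto \frac13\sum_k e^{i u_k\cdot z}$. Real and complex conventions: $\Gamma(Z,Z)=\Gamma(x,x)-\Gamma(y,y)+2i\Gamma(x,y)$, $\Gamma(Z,\bar Z)=\Gamma(x,x)+\Gamma(y,y)$, $\mathcal{L}(Z)=\mathcal{L}(x)+i\mathcal{L}(y)$. *)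

From Stdlib Require Import Reals.
From Coquelicot Require Import Coquelicot.
Open Scope R_scope.

Definition Cexpi (t : R) : Complex.C := (cos t, sin t).

Definition GammaZZ (Z : Complex.C) : Complex.C := (Cconj Z - Z * Z)%C.
Definition GammaZbZb (Z : Complex.C) : Complex.C := (Z - Cconj Z * Cconj Z)%C.
Definition GammaZZb (Z : Complex.C) : Complex.C := (/ 2 * (1 - Z * Cconj Z))%C.
Definition LZ (Z : Complex.C) : Complex.C := (- Z)%C.

Definition Dc (Z : Complex.C) : Complex.C :=
  (GammaZZb Z * GammaZZb Z - GammaZZ Z * GammaZbZb Z)%C.

(* Real coefficients, via Gamma(Z,Z) = G(x,x) - G(y,y) + 2i G(x,y),
   Gamma(Z,Zbar) = G(x,x) + G(y,y), L(Z) = L(x) + i L(y). *)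
Definition g11 (x y : R) : R := (Re (GammaZZ (x, y)) + Re (GammaZZb (x, y))) / 2.
Definition g22 (x y : R) : R := (Re (GammaZZb (x, y)) - Re (GammaZZ (x, y))) / 2.
Definition g12 (x y : R) : R := Im (GammaZZ (x, y)) / 2.
Definition b1 (x y : R) : R := Re (LZ (x, y)).
Definition b2 (x y : R) : R := Im (LZ (x, y)).

Definition dx (F : R -> R -> R) (x y : R) : R := Derive (fun t => F t y) x.
Definition dy (F : R -> R -> R) (x y : R) : R := Derive (fun t => F x t) y.

(* The diffusion operator: L f = sum_ij Gamma(x_i,x_j) d_i d_j f + sum_i L(x_i) d_i f *)
Definition Lop (f : R -> R -> R) (x y : R) : R :=
  g11 x y * dx (dx f) x y + g12 x y * dx (dy f) x y
  + g12 x y * dy (dx f) x y + g22 x y * dy (dy f) x y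
  + b1 x y * dx f x y + b2 x y * dy f x y.

Definition rho (x y : R) : R := / sqrt (Re (Dc (x, y))).

Definition divform (f : R -> R -> R) (x y : R) : R :=
  / rho x y *
  (dx (fun a b => rho a b * (g11 a b * dx f a b + g12 a b * dy f a b)) x y
 + dy (fun a b => rho a b * (g12 a b * dx f a b + g22 a b * dy f a b)) x y).

Definition u1 : R * R := (1, 0).
Definition u2 : R * R := (- / 2, sqrt 3 / 2).
Definition u3 : R * R := (- / 2, - (sqrt 3 / 2)).
Definition dot (u : R * R) (a b : R) : R := fst u * a + snd u * b.
Definition zk (u : R * R) (a b : R) : Complex.C := Cexpi (dot u a b).
Definition Zmap (a b : R) : Complex.C :=
  (/ 3 * (zk u1 a b + zk u2 a b + zk u3 a b))%C.

(* Deltoid domain: interior of the image of R^2 under Zmap. *)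
Definition in_image (w : Complex.C) : Prop := exists a b : R, Zmap a b = w.
Definition OmegaD (w : Complex.C) : Prop :=
  exists eps : R, 0 < eps /\ forall w', Cmod (w' - w)%C < eps -> in_image w'.

Definition deltoid (w : Complex.C) : Prop :=
  exists t : R, 0 <= t <= 2 * PI /\ w = (/ 3 * (2 * Cexpi t + Cexpi (-2 * t)))%C.

Definition boundary_OmegaD (w : Complex.C) : Prop :=
  (forall eps : R, 0 < eps -> exists w', OmegaD w' /\ Cmod (w' - w)%C < eps)
  /\ ~ OmegaD w.

From Stdlib Require Import Reals Lra Psatz.
From Coquelicot Require Import Coquelicot.
Open Scope R_scope.

(* Write [Z = (e^{2ip} + 2 c e^{-ip}) / 3] with [p, c] real ([Wpar p c]); then
   [D = 4/27 (cos 3p - c)^2 (1 - c^2)].  Every point of the plane has this form (pick [p]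
   by the intermediate value theorem so that [(3 Z - e^{2ip}) e^{ip}] is real), and
   [Zmap a b = Wpar (a/2) (cos (sqrt 3 b / 2))], so the image of [Zmap] is [{D >= 0}].
   In real coordinates [D] is a polynomial that turns negative just outside each of its
   zeros under a radial dilation, so the interior of the image is [{D > 0}] and its
   boundary is [{D = 0}], i.e. [c = 1], [c = -1] or [c = cos 3p]: the deltoid.
   Reversibility of [D^{-1/2}] amounts to [d_j (rho g^{ij}) = rho L(x_i)], a rational
   identity once [d_j rho / rho = - d_j D / (2 D)]; the last formula is an identity in
   [e^{ia}], [e^{ib}] since [z_1 z_2 z_3 = 1]. *)

Ltac C_to_R := unfold Cdiv, Cminus, Cmult, Cplus, Copp, Cconj, Cinv, RtoC; simpl.

Lemma Cexpi_add (a b : R) : Cexpi (a + b) = (Cexpi a * Cexpi b)%C.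
Proof. unfold Cexpi; C_to_R. rewrite cos_plus, sin_plus. f_equal; ring. Qed.

Lemma Cmod_Cexpi (a : R) : Cmod (Cexpi a) = 1.
Proof.
  unfold Cmod, Cexpi; simpl fst; simpl snd. rewrite <- sqrt_1, <- (sin2_cos2 a).
  unfold Rsqr. f_equal. ring.
Qed.

Lemma Cexpi_neq0 (a : R) : Cexpi a <> 0%C.
Proof. intro H. pose proof (Cmod_Cexpi a) as E. rewrite H, Cmod_0 in E. lra. Qed.

Lemma Cexpi_opp (a : R) : Cexpi (- a) = (/ Cexpi a)%C.
Proof.
  unfold Cexpi; C_to_R. rewrite cos_neg, sin_neg.
  assert (H : cos a * (cos a * 1) + sin a * (sin a * 1) = 1).
  { pose proof (sin2_cos2 a). unfold Rsqr in *. lra. }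
  rewrite H. f_equal; field.
Qed.

Lemma Cconj_Cexpi (a : R) : Cconj (Cexpi a) = (/ Cexpi a)%C.
Proof.
  rewrite <- Cexpi_opp. unfold Cexpi, Cconj; simpl. rewrite cos_neg, sin_neg. reflexivity.
Qed.

Lemma RtoC_cos (a : R) : RtoC (cos a) = ((Cexpi a + / Cexpi a) / 2)%C.
Proof.
  rewrite <- Cexpi_opp. unfold Cexpi. rewrite cos_neg, sin_neg. C_to_R. f_equal; field.
Qed.

Lemma Cexpi_PI : Cexpi PI = (- 1)%C.
Proof. unfold Cexpi. rewrite cos_PI, sin_PI. C_to_R. f_equal; ring. Qed.

Lemma Cexpi_2PI : Cexpi (2 * PI) = 1%C.
Proof. unfold Cexpi. rewrite cos_2PI, sin_2PI. reflexivity. Qed.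

Lemma Cconj_RtoC (r : R) : Cconj (RtoC r) = RtoC r.
Proof. C_to_R. f_equal; ring. Qed.

(* Unlike [Cinv_conj], no side condition: both sides are [0] at [0]. *)
Lemma Cconj_inv (z : C) : Cconj (/ z) = (/ Cconj z)%C.
Proof.
  destruct z as [a b]; C_to_R. unfold Rdiv.
  replace (- b * (- b * 1)) with (b * (b * 1)) by ring. f_equal; ring.
Qed.

Ltac push_Cconj :=
  repeat rewrite ?Cplus_conj, ?Cminus_conj, ?Cmult_conj, ?Cconj_inv, ?Cconj_RtoC, ?Cconj_Cexpi.

Definition Dpoly (x y : R) : R :=
  (1 - 6 * (x*x + y*y) - 3 * (x*x + y*y) * (x*x + y*y) + 8 * (x*x*x - 3*x*y*y)) / 4.

Lemma Dc_Dpoly (Z : C) : Dc Z = RtoC (Dpoly (fst Z) (snd Z)).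
Proof.
  destruct Z as [x y]. unfold Dc, GammaZZb, GammaZZ, GammaZbZb, Dpoly. C_to_R.
  f_equal; field.
Qed.

Lemma Dpoly_continuous (x y : R) : continuity_2d_pt Dpoly x y.
Proof.
  unfold Dpoly, Rdiv.
  repeat first [ apply continuity_2d_pt_mult | apply continuity_2d_pt_plus
               | apply continuity_2d_pt_minus | apply continuity_2d_pt_opp
               | apply continuity_2d_pt_id1
               | apply continuity_2d_pt_id2 | apply continuity_2d_pt_const ].
Qed.

Lemma Dpoly_continuous_Cmod (Z : C) (e : R) : 0 < e ->
  exists d, 0 < d /\ forall w : C, Cmod (w - Z) < d ->
    Rabs (Dpoly (fst w) (snd w) - Dpoly (fst Z) (snd Z)) < e.
Proof.
  intro He. destruct (Dpoly_continuous (fst Z) (snd Z) (mkposreal e He)) as [d Hd].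
  exists d. split; [apply cond_pos|]. intros w Hw.
  pose proof (Rmax_Cmod (w - Z)%C) as Hmax.
  apply Hd; eapply Rle_lt_trans; (try exact Hw); eapply Rle_trans; (try exact Hmax);
    [apply Rmax_l | apply Rmax_r].
Qed.

Definition Wpar (p c : R) : C := (/ 3 * (Cexpi p * Cexpi p + 2 * RtoC c / Cexpi p))%C.

Lemma Dpoly_Wpar (p c : R) :
  Dpoly (fst (Wpar p c)) (snd (Wpar p c)) = 4 / 27 * (cos (3 * p) - c) ^ 2 * (1 - c ^ 2).
Proof.
  assert (H : RtoC (Dpoly (fst (Wpar p c)) (snd (Wpar p c)))
              = RtoC (4 / 27 * (cos (3 * p) - c) ^ 2 * (1 - c ^ 2))).
  { rewrite <- Dc_Dpoly. unfold Rdiv.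
    repeat rewrite ?RtoC_mult, ?RtoC_minus, ?RtoC_pow.
    rewrite RtoC_inv by lra.
    replace (3 * p) with (p + p + p) by ring.
    rewrite RtoC_cos, !Cexpi_add.
    unfold Dc, GammaZZb, GammaZZ, GammaZbZb, Wpar, Cdiv. push_Cconj.
    pose proof (Cexpi_neq0 p). field. auto. }
  now injection H.
Qed.

Lemma Zmap_Wpar (a b : R) : Zmap a b = Wpar (a / 2) (cos (sqrt 3 / 2 * b)).
Proof.
  unfold Zmap, zk, dot, u1, u2, u3, Wpar; simpl.
  replace (1 * a + 0 * b) with (a / 2 + a / 2) by field.
  replace (- / 2 * a + sqrt 3 / 2 * b) with (sqrt 3 / 2 * b + - (a / 2)) by field.
  replace (- / 2 * a + - (sqrt 3 / 2) * b) with (- (sqrt 3 / 2 * b) + - (a / 2)) by field.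
  rewrite !Cexpi_add, !Cexpi_opp, RtoC_cos.
  pose proof (Cexpi_neq0 (a / 2)). pose proof (Cexpi_neq0 (sqrt 3 / 2 * b)).
  field. auto.
Qed.

Lemma Wpar_in_image (p c : R) : -1 <= c <= 1 -> in_image (Wpar p c).
Proof.
  intros Hc. exists (2 * p), (2 * acos c / sqrt 3).
  assert (sqrt 3 <> 0) by (apply Rgt_not_eq, sqrt_lt_R0; lra).
  rewrite Zmap_Wpar.
  replace (2 * p / 2) with p by field.
  replace (sqrt 3 / 2 * (2 * acos c / sqrt 3)) with (acos c) by (field; auto).
  now rewrite cos_acos.
Qed.

(* Choose [p] so that [(3 Z - e^{2ip}) e^{ip}] is real; it is [3 y] at [p = 0] and
   [-3 y] at [p = PI]. *)
Lemma exists_real_rotation (Z : C) :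
  exists p, 0 <= p <= PI /\ Im ((3 * Z - Cexpi p * Cexpi p) * Cexpi p) = 0.
Proof.
  destruct Z as [x y].
  set (g p := (3 * x - cos p * cos p + sin p * sin p) * sin p
              + (3 * y - 2 * cos p * sin p) * cos p).
  assert (Hg : forall p, Im ((3 * (x, y) - Cexpi p * Cexpi p) * Cexpi p)%C = g p).
  { intro p. unfold g, Cexpi. C_to_R. ring. }
  assert (Hcont : continuity g) by (unfold g; reg).
  assert (Hsign : g 0 * g PI <= 0).
  { unfold g. rewrite sin_0, cos_0, sin_PI, cos_PI. nra. }
  destruct (IVT_cor g 0 PI Hcont (Rlt_le _ _ PI_RGT_0) Hsign) as [p [Hp Hp0]].
  exists p. now rewrite Hg.
Qed.

Lemma Wpar_surjective (Z : C) : exists p c, 0 <= p <= PI /\ Z = Wpar p c.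
Proof.
  destruct (exists_real_rotation Z) as [p [Hp Him]].
  set (w := ((3 * Z - Cexpi p * Cexpi p) * Cexpi p)%C) in Him.
  exists p, (Re w / 2). split; [exact Hp|].
  assert (Hw : (2 * RtoC (Re w / 2))%C = w).
  { clearbody w. destruct w as [r s]. simpl in Him |- *. subst s. C_to_R. f_equal; field. }
  unfold Wpar. rewrite Hw. unfold w. pose proof (Cexpi_neq0 p). field. auto.
Qed.

Lemma Wpar_Dpoly_nonneg (p c : R) :
  0 <= Dpoly (fst (Wpar p c)) (snd (Wpar p c)) -> -1 <= c <= 1.
Proof.
  rewrite Dpoly_Wpar. intro H. pose proof (COS_bound (3 * p)).
  destruct (Req_dec (cos (3 * p)) c) as [E | E]; [now rewrite <- E|].
  assert (0 < (cos (3 * p) - c) ^ 2) by (apply pow2_gt_0; lra).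
  assert (0 <= 1 - c ^ 2).
  { apply (Rmult_le_reg_l (4 / 27 * (cos (3 * p) - c) ^ 2)); lra. }
  nra.
Qed.

Lemma in_image_iff (Z : C) : in_image Z <-> 0 <= Dpoly (fst Z) (snd Z).
Proof.
  split.
  - intros [a [b <-]]. rewrite Zmap_Wpar, Dpoly_Wpar.
    pose proof (COS_bound (sqrt 3 / 2 * b)).
    apply Rmult_le_pos; [apply Rmult_le_pos; [lra | apply pow2_ge_0] | nra].
  - intro H. destruct (Wpar_surjective Z) as [p [c [_ ->]]].
    now apply Wpar_in_image, (Wpar_Dpoly_nonneg p).
Qed.

Lemma deltoid_iff_Wpar (Z : C) :
  deltoid Z <-> exists t, 0 <= t <= 2 * PI /\ Z = Wpar (- t) 1.
Proof.
  assert (E : forall t, (/ 3 * (2 * Cexpi t + Cexpi (-2 * t)))%C = Wpar (- t) 1).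
  { intro t. replace (-2 * t) with (- t + - t) by ring. unfold Wpar.
    rewrite Cexpi_add, !Cexpi_opp. pose proof (Cexpi_neq0 t). field. auto. }
  split; intros [t [Ht HZ]]; exists t; split; auto; now rewrite HZ, E.
Qed.

Lemma Dpoly_eq0_iff_deltoid (Z : C) : Dpoly (fst Z) (snd Z) = 0 <-> deltoid Z.
Proof.
  rewrite deltoid_iff_Wpar. split.
  - destruct (Wpar_surjective Z) as [p [c [Hp ->]]].
    rewrite Dpoly_Wpar. intro H0.
    pose proof PI_RGT_0 as Hpi. pose proof (Cexpi_neq0 p) as Hu.
    unfold Wpar. destruct (Rmult_integral _ _ H0) as [Hc | Hc].
      assert (Ec : c = cos (3 * p)).
      { apply Rminus_diag_uniq_sym, Rsqr_0_uniq. unfold Rsqr. nra. }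
      exists (2 * p). split; [lra|]. rewrite Ec.
      replace (3 * p) with (p + p + p) by ring. replace (2 * p) with (p + p) by ring.
      rewrite RtoC_cos, Cexpi_opp, !Cexpi_add.
      field. auto.
    + assert (Ec : c = 1 \/ c = -1) by (apply Rsqr_eq; unfold Rsqr; nra).
      destruct Ec as [-> | ->].
      * exists (2 * PI - p). split; [lra|].
        replace (- (2 * PI - p)) with (- (2 * PI) + p) by ring.
        rewrite Cexpi_add, Cexpi_opp, Cexpi_2PI. field. auto.
      * exists (PI - p). split; [lra|].
        replace (- (PI - p)) with (- PI + p) by ring.
        rewrite Cexpi_add, Cexpi_opp, Cexpi_PI. field. auto.
  - intros [t [_ ->]]. rewrite Dpoly_Wpar. ring.
Qed.

Lemma Dpoly_dilate_neg (x y s : R) :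
  Dpoly x y = 0 -> 0 < s -> Dpoly ((1 + s) * x) ((1 + s) * y) < 0.
Proof.
  intros H0 Hs. set (r := x * x + y * y).
  assert (Hr : 0 < r).
  { destruct (Req_dec r 0) as [E | E].
    - assert (x = 0 /\ y = 0) as [-> ->] by (unfold r in E; nra).
      unfold Dpoly in H0. lra.
    - unfold r in *. nra. }
  assert (E : 4 * Dpoly ((1 + s) * x) ((1 + s) * y)
              = (1 + s) ^ 3 * (4 * Dpoly x y)
                - s * (3 * ((1 - r) + s * (1 - 3 * r) / 2) ^ 2
                       + s ^ 2 * (1 - 3 * r) ^ 2 / 4 + 3 * r ^ 2 * s ^ 3)).
  { unfold Dpoly, r. field. }
  rewrite H0 in E.
  assert (0 < 3 * r ^ 2 * s ^ 3) by (apply Rmult_lt_0_compat; [nra | apply pow_lt; lra]).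
  assert (0 <= ((1 - r) + s * (1 - 3 * r) / 2) ^ 2) by apply pow2_ge_0.
  assert (0 <= (s * (1 - 3 * r)) ^ 2) by apply pow2_ge_0.
  nra.
Qed.

Lemma OmegaD_iff (Z : C) : OmegaD Z <-> 0 < Dpoly (fst Z) (snd Z).
Proof.
  split.
  - intros [eps [He Hball]].
    assert (HZ : 0 <= Dpoly (fst Z) (snd Z)).
    { apply in_image_iff, Hball. replace (Z - Z)%C with (RtoC 0) by ring.
      rewrite Cmod_0. exact He. }
    destruct HZ as [HZ | HZ]; [exact HZ | exfalso].
    pose proof (Cmod_ge_0 Z).
    set (s := eps / (2 * (1 + Cmod Z))).
    assert (Hs : 0 < s) by (unfold s; apply Rdiv_lt_0_compat; lra).
    set (w := ((1 + s) * fst Z, (1 + s) * snd Z) : C).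
    assert (Hw : Cmod (w - Z) < eps).
    { replace (w - Z)%C with (RtoC s * Z)%C.
      2: { unfold w. destruct Z. C_to_R. f_equal; ring. }
      rewrite Cmod_mult, Cmod_R, Rabs_pos_eq by lra.
      assert (s * (1 + Cmod Z) = eps / 2) by (unfold s; field; lra).
      nra. }
    pose proof (proj1 (in_image_iff w) (Hball w Hw)) as Hwpos.
    pose proof (Dpoly_dilate_neg (fst Z) (snd Z) s (eq_sym HZ) Hs).
    unfold w in Hwpos. simpl in Hwpos. lra.
  - intro HZ.
    destruct (Dpoly_continuous_Cmod Z _ HZ) as [d [Hd Hnear]].
    exists d. split; [exact Hd|]. intros w Hw.
    apply in_image_iff. specialize (Hnear w Hw). apply Rabs_def2 in Hnear. lra.
Qed.

Lemma Wpar_approx (p eps : R) : 0 < eps ->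
  exists c, 0 < Dpoly (fst (Wpar p c)) (snd (Wpar p c)) /\ Cmod (Wpar p c - Wpar p 1) < eps.
Proof.
  intro He. set (d := Rmin (1 / 2) (eps / 2)).
  assert (0 < d) by (apply Rmin_pos; lra).
  assert (d <= 1 / 2) by apply Rmin_l.
  assert (d <= eps / 2) by apply Rmin_r.
  assert (Hc : exists c, 1 - d <= c < 1 /\ c <> cos (3 * p)).
  { destruct (Req_dec (cos (3 * p)) (1 - d)).
    - exists (1 - d / 2). split; lra.
    - exists (1 - d). split; [lra | auto]. }
  destruct Hc as [c [Hc Hcos]]. exists c. split.
  - rewrite Dpoly_Wpar.
    assert (0 < (cos (3 * p) - c) ^ 2) by (apply pow2_gt_0; lra).
    apply Rmult_lt_0_compat; [apply Rmult_lt_0_compat|]; nra.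
  - replace (Wpar p c - Wpar p 1)%C with (RtoC (2 * (c - 1) / 3) * Cexpi (- p))%C.
    + rewrite Cmod_mult, Cmod_R, Cmod_Cexpi, Rabs_left1; lra.
    + unfold Wpar. rewrite Cexpi_opp. pose proof (Cexpi_neq0 p).
      unfold Rdiv. rewrite !RtoC_mult, RtoC_minus, RtoC_inv by lra. field. auto.
Qed.

Lemma boundary_OmegaD_iff (Z : C) : boundary_OmegaD Z <-> Dpoly (fst Z) (snd Z) = 0.
Proof.
  split.
  - intros [Hclose HnotO]. rewrite OmegaD_iff in HnotO.
    destruct (Rtotal_order (Dpoly (fst Z) (snd Z)) 0) as [Hneg | [H0 | Hpos]];
      [exfalso | exact H0 | contradiction].
    destruct (Dpoly_continuous_Cmod Z _ (Ropp_0_gt_lt_contravar _ Hneg)) as [d [Hd Hnear]].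
    destruct (Hclose d Hd) as [w [Hw Hwd]].
    apply OmegaD_iff in Hw. specialize (Hnear w Hwd). apply Rabs_def2 in Hnear. lra.
  - intro H0. split.
    + apply Dpoly_eq0_iff_deltoid, deltoid_iff_Wpar in H0. destruct H0 as [t [_ ->]].
      intros eps He. destruct (Wpar_approx (- t) eps He) as [c [Hpos Hc]].
      exists (Wpar (- t) c). split; [now apply OmegaD_iff | exact Hc].
    + rewrite OmegaD_iff. lra.
Qed.

Lemma is_derive_Rmult (f g : R -> R) (x df dg : R) :
  is_derive f x df -> is_derive g x dg ->
  is_derive (fun t => f t * g t) x (df * g x + f x * dg).
Proof. intros. apply (is_derive_mult (K := R_AbsRing)); auto. intros; apply Rmult_comm. Qed.

Lemma is_derive_Rplus (f g : R -> R) (x df dg : R) :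
  is_derive f x df -> is_derive g x dg -> is_derive (fun t => f t + g t) x (df + dg).
Proof. intros. now apply (is_derive_plus (K := R_AbsRing) (V := R_NormedModule)). Qed.

Lemma is_derive_inv_sqrt (F : R -> R) (x d : R) : 0 < F x -> is_derive F x d ->
  is_derive (fun t => / sqrt (F t)) x (- d / (2 * F x) * / sqrt (F x)).
Proof.
  intros HF Hd. pose proof (sqrt_lt_R0 _ HF) as Hs.
  pose proof (sqrt_sqrt _ (Rlt_le _ _ HF)) as Hss.
  replace (- d / (2 * F x) * / sqrt (F x)) with (- (d / (2 * sqrt (F x))) / sqrt (F x) ^ 2)
    by (set (s := sqrt (F x)) in *; rewrite <- Hss; field; lra).
  apply (is_derive_inv (fun t => sqrt (F t))); [now apply is_derive_sqrt | lra].
Qed.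

Definition Dpoly_x (x y : R) : R := - 3 * x - 3 * (x * x + y * y) * x + 6 * (x * x - y * y).
Definition Dpoly_y (x y : R) : R := - 3 * y - 3 * (x * x + y * y) * y - 12 * x * y.

Lemma rho_Dpoly (x y : R) : rho x y = / sqrt (Dpoly x y).
Proof. unfold rho. now rewrite Dc_Dpoly. Qed.

Lemma is_derive_rho_x (x y : R) : 0 < Dpoly x y ->
  is_derive (fun t => rho t y) x (- Dpoly_x x y / (2 * Dpoly x y) * rho x y).
Proof.
  intro HD. apply (is_derive_ext (fun t => / sqrt (Dpoly t y))); [intro; now rewrite rho_Dpoly|].
  rewrite rho_Dpoly. apply (is_derive_inv_sqrt (fun t => Dpoly t y)); [exact HD|].
  unfold Dpoly. auto_derive; [easy|]. unfold Dpoly_x. field.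
Qed.

Lemma is_derive_rho_y (x y : R) : 0 < Dpoly x y ->
  is_derive (fun t => rho x t) y (- Dpoly_y x y / (2 * Dpoly x y) * rho x y).
Proof.
  intro HD. apply (is_derive_ext (fun t => / sqrt (Dpoly x t))); [intro; now rewrite rho_Dpoly|].
  rewrite rho_Dpoly. apply (is_derive_inv_sqrt (fun t => Dpoly x t)); [exact HD|].
  unfold Dpoly. auto_derive; [easy|]. unfold Dpoly_y. field.
Qed.

Lemma g11_poly (x y : R) : g11 x y = (1 + 2 * x - 3 * x * x + y * y) / 4.
Proof. unfold g11, GammaZZ, GammaZZb. C_to_R. field. Qed.

Lemma g12_poly (x y : R) : g12 x y = - y * (1 + 2 * x) / 2.
Proof. unfold g12, GammaZZ. C_to_R. field. Qed.

Lemma g22_poly (x y : R) : g22 x y = (1 - 2 * x + x * x - 3 * y * y) / 4.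
Proof. unfold g22, GammaZZ, GammaZZb. C_to_R. field. Qed.

Lemma is_derive_g11_x (x y : R) : is_derive (fun t => g11 t y) x ((1 - 3 * x) / 2).
Proof.
  apply (is_derive_ext (fun t => (1 + 2 * t - 3 * t * t + y * y) / 4)); [intro; now rewrite g11_poly|].
  auto_derive; [easy | field].
Qed.

Lemma is_derive_g12_x (x y : R) : is_derive (fun t => g12 t y) x (- y).
Proof.
  apply (is_derive_ext (fun t => - y * (1 + 2 * t) / 2)); [intro; now rewrite g12_poly|].
  auto_derive; [easy | field].
Qed.

Lemma is_derive_g12_y (x y : R) : is_derive (fun t => g12 x t) y (- (1 + 2 * x) / 2).
Proof.
  apply (is_derive_ext (fun t => - t * (1 + 2 * x) / 2)); [intro; now rewrite g12_poly|].
  auto_derive; [easy | field].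
Qed.

Lemma is_derive_g22_y (x y : R) : is_derive (fun t => g22 x t) y (- 3 * y / 2).
Proof.
  apply (is_derive_ext (fun t => (1 - 2 * x + x * x - 3 * t * t) / 4)); [intro; now rewrite g22_poly|].
  auto_derive; [easy | field].
Qed.

(* The drift is [rho^{-1} d_j (rho g^{ij})], with [d_j rho / rho = - d_j D / (2 D)]. *)
Lemma density_drift (x y : R) : Dpoly x y <> 0 ->
  (1 - 3 * x) / 2 - (1 + 2 * x) / 2
    - (g11 x y * Dpoly_x x y + g12 x y * Dpoly_y x y) / (2 * Dpoly x y) = b1 x y
  /\ - y - 3 * y / 2
    - (g12 x y * Dpoly_x x y + g22 x y * Dpoly_y x y) / (2 * Dpoly x y) = b2 x y.
Proof.
  intro HD. rewrite g11_poly, g12_poly, g22_poly. unfold b1, b2, LZ, Dpoly_x, Dpoly_y. simpl.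
  unfold Dpoly in *. split; field; lra.
Qed.

Lemma Lop_divform (f : R -> R -> R) :
  (forall x y, ex_derive (fun t => dx f t y) x) ->
  (forall x y, ex_derive (fun t => dx f x t) y) ->
  (forall x y, ex_derive (fun t => dy f t y) x) ->
  (forall x y, ex_derive (fun t => dy f x t) y) ->
  forall x y : R, 0 < Dpoly x y -> Lop f x y = divform f x y.
Proof.
  intros Hxx Hxy Hyx Hyy x y HD.
  pose proof (is_derive_Rmult _ _ x _ _ (is_derive_rho_x x y HD)
    (is_derive_Rplus _ _ x _ _
      (is_derive_Rmult _ _ x _ _ (is_derive_g11_x x y)
        (Derive_correct _ _ (Hxx x y) : is_derive _ _ (dx (dx f) x y)))
      (is_derive_Rmult _ _ x _ _ (is_derive_g12_x x y)
        (Derive_correct _ _ (Hyx x y) : is_derive _ _ (dx (dy f) x y)))))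
    as Hflux_x.
  pose proof (is_derive_Rmult _ _ y _ _ (is_derive_rho_y x y HD)
    (is_derive_Rplus _ _ y _ _
      (is_derive_Rmult _ _ y _ _ (is_derive_g12_y x y)
        (Derive_correct _ _ (Hxy x y) : is_derive _ _ (dy (dx f) x y)))
      (is_derive_Rmult _ _ y _ _ (is_derive_g22_y x y)
        (Derive_correct _ _ (Hyy x y) : is_derive _ _ (dy (dy f) x y)))))
    as Hflux_y.
  unfold divform.
  change (dx (fun a b => rho a b * (g11 a b * dx f a b + g12 a b * dy f a b)) x y)
    with (Derive (fun t : R_AbsRing => rho t y * (g11 t y * dx f t y + g12 t y * dy f t y)) x).
  change (dy (fun a b => rho a b * (g12 a b * dx f a b + g22 a b * dy f a b)) x y)
    with (Derive (fun t : R_AbsRing => rho x t * (g12 x t * dx f x t + g22 x t * dy f x t)) y).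
  rewrite (is_derive_unique _ _ _ Hflux_x), (is_derive_unique _ _ _ Hflux_y).
  destruct (density_drift x y (Rgt_not_eq _ _ HD)) as [Hb1 Hb2].
  unfold Lop. rewrite <- Hb1, <- Hb2.
  assert (Hrho : 0 < rho x y) by (rewrite rho_Dpoly; apply Rinv_0_lt_compat, sqrt_lt_R0, HD).
  field. split; lra.
Qed.

Lemma Dc_Zmap (a b : R) :
  Dc (Zmap a b) =
  (- ((zk u1 a b - zk u2 a b) * (zk u1 a b - zk u2 a b)
      * ((zk u2 a b - zk u3 a b) * (zk u2 a b - zk u3 a b))
      * ((zk u3 a b - zk u1 a b) * (zk u3 a b - zk u1 a b)))
   / (RtoC (2 ^ 2 * 3 ^ 3)))%C.
Proof.
  assert (E : dot u3 a b = - (dot u1 a b + dot u2 a b)) by (unfold dot, u1, u2, u3; simpl; field).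
  unfold Zmap, zk. rewrite E, Cexpi_opp, Cexpi_add.
  pose proof (Cexpi_neq0 (dot u1 a b)). pose proof (Cexpi_neq0 (dot u2 a b)).
  replace (2 ^ 2 * 3 ^ 3) with 108 by ring.
  unfold Dc, GammaZZb, GammaZZ, GammaZbZb. push_Cconj.
  field. repeat split; auto.
Qed.

Theorem proposition3p5 :
  (* (1) D > 0 on the deltoid domain (D is real there) *)
  (forall Z : Complex.C, OmegaD Z -> Im (Dc Z) = 0 /\ 0 < Re (Dc Z))
  (* (2) {D = 0} is the deltoid curve, i.e. the boundary of OmegaD *)
  /\ (forall Z : Complex.C, Dc Z = RtoC 0 <-> deltoid Z)
  /\ (forall Z : Complex.C, deltoid Z <-> boundary_OmegaD Z)
  (* (3) rho = D^{-1/2} is a reversible density: L f = rho^{-1} d_i(rho g^{ij} d_j f) *)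
  /\ (forall f : R -> R -> R,
        (forall x y, ex_derive (fun t => f t y) x) ->
        (forall x y, ex_derive (fun t => f x t) y) ->
        (forall x y, ex_derive (fun t => dx f t y) x) ->
        (forall x y, ex_derive (fun t => dx f x t) y) ->
        (forall x y, ex_derive (fun t => dy f t y) x) ->
        (forall x y, ex_derive (fun t => dy f x t) y) ->
        forall x y : R, OmegaD (x, y) -> Lop f x y = divform f x y)
  (* (4) D in terms of z_k = e^{i u_k . z} *)
  /\ (forall a b : R,
        Dc (Zmap a b) =
        (- ((zk u1 a b - zk u2 a b) * (zk u1 a b - zk u2 a b)
            * ((zk u2 a b - zk u3 a b) * (zk u2 a b - zk u3 a b))
            * ((zk u3 a b - zk u1 a b) * (zk u3 a b - zk u1 a b)))
         / (RtoC (2 ^ 2 * 3 ^ 3)))%C).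
Proof.
  assert (Hzero : forall Z, Dc Z = RtoC 0 <-> deltoid Z).
  { intro Z. rewrite <- Dpoly_eq0_iff_deltoid, Dc_Dpoly.
    split; [now injection 1 | now intros ->]. }
  split; [| split; [exact Hzero | split; [| split]]].
  - intros Z HZ. rewrite Dc_Dpoly. split; [reflexivity|]. now apply OmegaD_iff.
  - intro Z. now rewrite boundary_OmegaD_iff, Dpoly_eq0_iff_deltoid.
  - intros f _ _ Hxx Hxy Hyx Hyy x y HO.
    apply Lop_divform; [assumption.. | exact (proj1 (OmegaD_iff (x, y)) HO)].
  - exact Dc_Zmap.
Qed.
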